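(* Let $q\in\mathbb C\setminus\{0\}$ with $q^2\ne1$, $n\ge1$, $\eta_1,\dots,\eta_n\in\mathbb C\setminus\{0\}$ and $\alpha_1,\dots,\alpha_n\in\mathbb Z_{\ge0}$, such that all denominators below are nonzero. Then $$\sum_{a=1}^{n}[\alpha_a]\prod_{i\ne a}\frac{q^{\alpha_a}\eta_i/\eta_a-\eta_a/(q^{\alpha_a}\eta_i)}{q^{\alpha_a-\alpha_i}\eta_i/\eta_a-\eta_a/(q^{\alpha_a-\alpha_i}\eta_i)}=\Big[\sum_{a=1}^n\alpha_a\Big],$$ where $[r]=(q^r-q^{-r})/(q-q^{-1})$. *)

(* The field of complex numbers is taken to be an arbitrary
   numClosedFieldType (algebraically closed field with conjugation/norm),
   of which C is the model. *)
From HB Require Import structures.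
From mathcomp Require Import all_boot all_order all_algebra.
Set Implicit Arguments. Unset Strict Implicit. Unset Printing Implicit Defensive.
Import Order.TTheory GRing.Theory Num.Theory.
Local Open Scope ring_scope.

Definition qnum (C : numClosedFieldType) (q : C) (r : int) : C :=
  (q ^ r - q ^ (- r)) / (q - q^-1).

From HB Require Import structures.
From mathcomp Require Import all_boot all_order all_algebra ring.
Import Order.TTheory GRing.Theory Num.Theory.
Local Open Scope ring_scope.

(* Writing u_i = q^alpha_i, X_i = eta_i^2 and Y_i = (eta_i / u_i)^2, each
   factor of the product equals u_i^-1 (X_i - Y_a) / (Y_i - Y_a), and the
   denominator hypothesis says exactly that the Y_i are pairwise distinct.
   After multiplying by q - q^-1 the identity therefore reduces to the
   partial-fraction identity
     sum_a (X_a - Y_a)/Y_a prod_(i <> a) (X_i - Y_a)/(Y_i - Y_a)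
       = prod_i X_i/Y_i - 1,
   which compares the leading coefficient of g = prod_i (x - X_i) with its
   Lagrange interpolation at the n + 1 nodes 0, Y_1, ..., Y_n. *)

Section DividedDifference.
Variables (K : fieldType) (n : nat) (z : 'I_n.+1 -> K).
Hypothesis z_inj : injective z.

Definition node_poly (k : 'I_n.+1) : {poly K} :=
  \prod_(j < n.+1 | j != k) ('X - (z j)%:P).

Definition node_weight (k : 'I_n.+1) : K := \prod_(j < n.+1 | j != k) (z k - z j).

Lemma size_node_poly k : size (node_poly k) = n.+1.
Proof.
rewrite /node_poly -big_filter size_prod_XsubC; congr _.+1.
transitivity #|predC1 k|; last by rewrite cardC1 card_ord.
by rewrite cardE /enum_mem [index_enum _]unlock.
Qed.

Lemma node_weight_neq0 k : node_weight k != 0.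
Proof.
by apply/prodf_neq0 => j jk; rewrite subr_eq0 (inj_eq z_inj) eq_sym.
Qed.

Lemma node_poly_at k m : (node_poly k).[z m] = (m == k)%:R * node_weight k.
Proof.
rewrite /node_poly horner_prod; have [->|mk] := eqVneq m k.
  by rewrite mul1r; apply: eq_bigr => j _; rewrite hornerXsubC.
by rewrite mul0r (bigD1 m) //= hornerXsubC subrr mul0r.
Qed.

(* Lagrange interpolation: a polynomial of degree at most n is determined by
   its values at the nodes, since the difference has too many roots. *)
Lemma lagrange_expansion (g : {poly K}) : (size g <= n.+1)%N ->
  g = \sum_(k < n.+1) (g.[z k] / node_weight k) *: node_poly k.
Proof.
move=> sg; apply/eqP; rewrite -subr_eq0; apply/eqP.
apply: (@roots_geq_poly_eq0 _ _ [seq z k | k <- enum 'I_n.+1]).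
- apply/allP => _ /mapP [m _ ->]; rewrite /root hornerD hornerN horner_sum.
  rewrite (bigD1 m) //= big1 => [|k km]; rewrite hornerZ node_poly_at.
    by rewrite eqxx mul1r addr0 divfK ?node_weight_neq0 // subrr.
  by rewrite eq_sym (negPf km) mul0r mulr0.
- by rewrite map_inj_uniq ?enum_uniq.
- rewrite size_map size_enum_ord; apply: leq_trans (size_polyD _ _) _.
  rewrite geq_max sg size_polyN; apply: leq_trans (size_sum _ _ _) _.
  apply/bigmax_leqP => k _; apply: leq_trans (size_scale_leq _ _) _.
  by rewrite size_node_poly.
Qed.

Lemma top_coef_interpolation (g : {poly K}) : (size g <= n.+1)%N ->
  g`_n = \sum_(k < n.+1) g.[z k] / node_weight k.
Proof.
move=> /lagrange_expansion {1}->; rewrite coef_sum; apply: eq_bigr => k _.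
have /monicP : node_poly k \is monic by apply: monic_prod_XsubC.
by rewrite coefZ lead_coefE size_node_poly => ->; rewrite mulr1.
Qed.

End DividedDifference.

Section PartialFractions.
Variables (K : fieldType) (n : nat) (Y : 'I_n -> K).
Hypothesis Y_neq0 : forall i, Y i != 0.
Hypothesis Y_inj : injective Y.

(* The n + 1 interpolation nodes: 0 at index 0, then Y_a at index a + 1. *)
Definition zero_and_nodes (k : 'I_n.+1) : K := oapp Y 0 (unlift ord0 k).

Lemma zero_and_nodes0 : zero_and_nodes ord0 = 0.
Proof. by rewrite /zero_and_nodes unlift_none. Qed.

Lemma zero_and_nodes_lift a : zero_and_nodes (lift ord0 a) = Y a.
Proof. by rewrite /zero_and_nodes liftK. Qed.

Lemma zero_and_nodes_inj : injective zero_and_nodes.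
Proof.
move=> k m; rewrite /zero_and_nodes.
case: (unliftP ord0 k) => [a ->|->]; case: (unliftP ord0 m) => [b ->|->] //=.
- by move/Y_inj->.
- by move/eqP; rewrite (negPf (Y_neq0 a)).
- by move/esym/eqP; rewrite (negPf (Y_neq0 b)).
Qed.

Lemma prod_neq_ord0 (F : 'I_n.+1 -> K) :
  \prod_(j < n.+1 | j != ord0) F j = \prod_(b < n) F (lift ord0 b).
Proof.
by rewrite big_mkcond big_ord_recl eqxx /= mul1r.
Qed.

Lemma prod_neq_lift (F : 'I_n.+1 -> K) (a : 'I_n) :
  \prod_(j < n.+1 | j != lift ord0 a) F j
    = F ord0 * \prod_(b < n | b != a) F (lift ord0 b).
Proof.
rewrite big_mkcond big_ord_recl neq_lift [in RHS]big_mkcond /=.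
by congr (_ * _); apply: eq_bigr => b _; rewrite (inj_eq lift_inj).
Qed.

(* The residues of g(x) / (x prod_i (x - Y_i)) at 0 and at the Y_a add up to
   the leading coefficient 1 of the monic g = prod_i (x - X_i); concretely,
   top_coef_interpolation for g at the nodes 0, Y_1, ..., Y_n. *)
Lemma partial_fraction_identity (X : 'I_n -> K) :
  \sum_(a < n) (X a - Y a) / Y a * \prod_(i < n | i != a) ((X i - Y a) / (Y i - Y a))
  = \prod_(i < n) (X i / Y i) - 1.
Proof.
pose g := \prod_(i < n) ('X - (X i)%:P).
have size_g : size g = n.+1.
  by rewrite size_prod_XsubC [index_enum _]unlock -enumT size_enum_ord.
have := @top_coef_interpolation K n _ zero_and_nodes_inj g.
rewrite size_g leqnn => /(_ isT).
have /monicP : g \is monic by apply: monic_prod_XsubC.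
rewrite lead_coefE size_g /= => ->; rewrite big_ord_recl.
rewrite /node_weight zero_and_nodes0 prod_neq_ord0.
have at_zero : g.[0] / \prod_(b < n) (0 - zero_and_nodes (lift ord0 b))
    = \prod_(i < n) (X i / Y i).
  rewrite horner_prod -prodf_div; apply: eq_bigr => i _.
  by rewrite hornerXsubC zero_and_nodes_lift !sub0r invrN mulrNN.
have at_node a : g.[zero_and_nodes (lift ord0 a)] /
    \prod_(j < n.+1 | j != lift ord0 a) (zero_and_nodes (lift ord0 a) - zero_and_nodes j)
    = - ((X a - Y a) / Y a * \prod_(i < n | i != a) ((X i - Y a) / (Y i - Y a))).
  have -> : \prod_(i < n | i != a) ((X i - Y a) / (Y i - Y a))
      = \prod_(i < n | i != a) (Y a - X i) / \prod_(i < n | i != a) (Y a - Y i).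
    by rewrite -prodf_div; apply: eq_bigr => i _; rewrite -mulrNN -invrN !opprB.
  have nodes_neq0 : \prod_(i < n | i != a) (Y a - Y i) != 0.
    by apply/prodf_neq0 => i ia; rewrite subr_eq0 (inj_eq Y_inj) eq_sym.
  rewrite prod_neq_lift !zero_and_nodes_lift zero_and_nodes0 subr0.
  under eq_bigr do rewrite zero_and_nodes_lift.
  rewrite horner_prod (bigD1 a) //= hornerXsubC.
  under eq_bigr do rewrite hornerXsubC.
  by field; rewrite Y_neq0 nodes_neq0.
rewrite at_zero (eq_bigr _ (fun a _ => at_node a)) sumrN => top.
by rewrite [X in _ = _ - X]top opprB addrC subrK.
Qed.

End PartialFractions.

(* With [t = u_a eta_i / eta_a], the numerator [t - 1/t] equals
   [(t^2 - 1)/t]; clearing denominators turns each factor of the theorem into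
   a ratio [(X_i - Y_a)/(Y_i - Y_a)] with [X_i = eta_i^2], [Y_i = (eta_i/u_i)^2]. *)
Lemma sym_ratio_squares (K : fieldType) (ua ui ea ei : K) :
  ua != 0 -> ui != 0 -> ea != 0 -> ei != 0 ->
  (ei / ui) ^+ 2 - (ea / ua) ^+ 2 != 0 ->
  (ua * ei / ea - ea / (ua * ei)) / (ua / ui * ei / ea - ea / (ua / ui * ei))
  = ui^-1 * ((ei ^+ 2 - (ea / ua) ^+ 2) / ((ei / ui) ^+ 2 - (ea / ua) ^+ 2)).
Proof.
move=> ua0 ui0 ea0 ei0 diff0.
have cleared : (ei * ua) ^+ 2 + - ea ^+ 2 * ui ^+ 2
    = ((ei / ui) ^+ 2 - (ea / ua) ^+ 2) * (ua * ui) ^+ 2.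
  by field; rewrite ua0 ui0.
by field; rewrite ua0 ui0 ea0 ei0 cleared mulf_neq0 // expf_neq0 // mulf_neq0.
Qed.

(* The denominators of the theorem vanish exactly when two of the [Y_i]
   coincide, so the hypothesis on them makes the nodes [Y_i] distinct. *)
Lemma sym_denominator_neq0 (K : fieldType) (ua ui ea ei : K) :
  ua != 0 -> ui != 0 -> ea != 0 -> ei != 0 ->
  ua / ui * ei / ea - ea / (ua / ui * ei) != 0 ->
  (ei / ui) ^+ 2 - (ea / ua) ^+ 2 != 0.
Proof.
move=> ua0 ui0 ea0 ei0 den0.
have -> : (ei / ui) ^+ 2 - (ea / ua) ^+ 2
    = (ua / ui * ei / ea - ea / (ua / ui * ei)) * (ea / ua) ^+ 2 * (ua / ui * ei / ea).
  by field; rewrite ua0 ui0 ea0 ei0.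
by rewrite !mulf_neq0 ?expf_neq0 ?invr_neq0.
Qed.

(* The theorem in multiplicative form, over any field and for arbitrary
   nonzero "exponentials" [u_i] in place of [q^alpha_i]: the right-hand side
   [U - 1/U], [U = prod_i u_i], is the numerator of [[sum_i alpha_i]]. *)
Lemma sym_product_sum (K : fieldType) (n : nat) (u eta : 'I_n -> K) :
  (forall i, u i != 0) -> (forall i, eta i != 0) ->
  (forall a i, i != a ->
     u a / u i * eta i / eta a - eta a / (u a / u i * eta i) != 0) ->
  \sum_(a < n) (u a - (u a)^-1) *
     \prod_(i < n | i != a)
       ((u a * eta i / eta a - eta a / (u a * eta i)) /
        (u a / u i * eta i / eta a - eta a / (u a / u i * eta i)))
  = \prod_(i < n) u i - (\prod_(i < n) u i)^-1.
Proof.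
move=> u_neq0 eta_neq0 den_neq0.
pose X i := eta i ^+ 2; pose Y i := (eta i / u i) ^+ 2.
have Y_neq0 i : Y i != 0 by rewrite expf_neq0 // mulf_neq0 ?invr_neq0.
have Y_sub_neq0 a i : i != a -> Y i - Y a != 0.
  by move=> ia; apply: sym_denominator_neq0; rewrite ?den_neq0.
have Y_inj : injective Y.
  move=> i j /eqP; apply: contraTeq => ij; rewrite -subr_eq0.
  by rewrite Y_sub_neq0 // eq_sym.
have summand a : (u a - (u a)^-1) *
    \prod_(i < n | i != a)
      ((u a * eta i / eta a - eta a / (u a * eta i)) /
       (u a / u i * eta i / eta a - eta a / (u a / u i * eta i)))
    = (\prod_(i < n) u i)^-1 *
      ((X a - Y a) / Y a * \prod_(i < n | i != a) ((X i - Y a) / (Y i - Y a))).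
  under eq_bigr => i ia do rewrite sym_ratio_squares ?Y_sub_neq0 //.
  rewrite big_split /= prodfV [in RHS](bigD1 a) //=.
  have others_neq0 : \prod_(i < n | i != a) u i != 0 by apply/prodf_neq0.
  by rewrite /X /Y; field; rewrite others_neq0 !u_neq0 !eta_neq0.
have ratio i : X i / Y i = u i ^+ 2.
  by rewrite /X /Y; field; rewrite u_neq0 eta_neq0.
have prod_neq0 : \prod_(i < n) u i != 0 by apply/prodf_neq0.
rewrite (eq_bigr _ (fun a _ => summand a)) -mulr_sumr partial_fraction_identity //.
by rewrite (eq_bigr _ (fun i _ => ratio i)) prodrXl; field.
Qed.

Lemma qnum_nat (C : numClosedFieldType) (q : C) (r : nat) :
  qnum q r%:Z = (q ^+ r - (q ^+ r)^-1) / (q - q^-1).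
Proof. by rewrite /qnum -exprnN. Qed.

Theorem mainTheorem6 (C : numClosedFieldType) (q : C) (n : nat)
  (eta : 'I_n -> C) (alpha : 'I_n -> nat)
  (hq0 : q != 0) (hq2 : q ^+ 2 != 1) (hn : (0 < n)%N)
  (heta : forall i, eta i != 0)
  (hden : forall a i : 'I_n, i != a ->
     q ^ ((alpha a)%:Z - (alpha i)%:Z) * eta i / eta a
       - eta a / (q ^ ((alpha a)%:Z - (alpha i)%:Z) * eta i) != 0) :
  \sum_(a < n) qnum q (alpha a)%:Z *
     \prod_(i < n | i != a)
       ((q ^+ alpha a * eta i / eta a - eta a / (q ^+ alpha a * eta i)) /
        (q ^ ((alpha a)%:Z - (alpha i)%:Z) * eta i / eta a
           - eta a / (q ^ ((alpha a)%:Z - (alpha i)%:Z) * eta i)))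
  = qnum q (\sum_(a < n) alpha a)%N%:Z.
Proof.
have exp_diff a i : q ^ ((alpha a)%:Z - (alpha i)%:Z) = q ^+ alpha a / q ^+ alpha i.
  by rewrite expfzDr // -exprnN.
under eq_bigr => a _ do rewrite qnum_nat mulrAC.
rewrite -mulr_suml.
under eq_bigr => a _ do under eq_bigr => i _ do rewrite exp_diff.
rewrite sym_product_sum //; last by move=> a i ia; rewrite -exp_diff hden.
- by rewrite prodrXr qnum_nat.
- by move=> i; rewrite expf_neq0.
Qed.
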